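(* For all $r\ge3$ and all $N$, $$\operatorname{Im}\Big(\phi^{(r-1)}_{N,r}\circ\phi^{(r-2)}_{N,r}|_{\mathbf W_{N,r}}\circ\cdots\circ\phi^{(2)}_{N,r}|_{\mathbf W_{N,r}}\Big)\subseteq\ker\phi^{(r)}_{N,r}\cap\operatorname{Im}\Big(\phi^{(r-1)}_{N,r}\circ\cdots\circ\phi^{(2)}_{N,r}\Big),$$ where the left-hand composition is applied to $\mathbf W_{N,r}$ (for $r=3$ it is $\phi^{(2)}_{N,3}$ applied to $\mathbf W_{N,3}$), and the right-hand composition is applied to $\mathbf V_{N,r}$.
   Context: For integers $N,r\ge1$ let $S_{N,r}=\{(n_1,\dots,n_r)\in\mathbb Z^r:\ n_1+\dots+n_r=N,\ \text{each } n_i\ge3 \text{ odd}\}$; when used as an index set it is ordered lexicographically decreasingly. $\mathbf V_{N,r}$ is the $\mathbb Q$-span of the monomials $x_1^{n_1-1}\cdots x_r^{n_r-1}$ with $(n_1,\dots,n_r)\in S_{N,r}$. $\mathsf{Vect}_{N,r}=\mathbb Q^{S_{N,r}}$ (row vectors), and $\pi:\mathbf V_{N,r}\to\mathsf{Vect}_{N,r}$ is the isomorphism sending $\sum a_{n_1,\dots,n_r}x_1^{n_1-1}\cdots x_r^{n_r-1}$ to $(a_{n_1,\dots,n_r})_{(n_1,\dots,n_r)\in S_{N,r}}$. For $r\ge2$, $\mathbf W_{N,r}=\{P\in\mathbf V_{N,r}: P(x_1,\dots,x_r)=P(x_2-x_1,x_2,x_3,\dots,x_r)-P(x_2-x_1,x_1,x_3,\dots,x_r)\}$.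 Ihara action: for $f\in\mathbb Q[t]$ and a polynomial $g$ in $r-1$ variables, $(f\mathbin{\underline\circ}g)(x_1,\dots,x_r)=f(x_1)g(x_2,\dots,x_r)+\sum_{i=1}^{r-1}\big(f(x_{i+1}-x_i)g(x_1,\dots,\widehat{x_{i+1}},\dots,x_r)-(-1)^{\deg f}f(x_i-x_{i+1})g(x_1,\dots,\widehat{x_i},\dots,x_r)\big)$ (hats denote omitted variables). For positive integers $m_i,n_i$, $e\binom{m_1,\dots,m_r}{n_1,\dots,n_r}$ is the coefficient of $x_1^{n_1-1}\cdots x_r^{n_r-1}$ in $t^{m_1-1}\mathbin{\underline\circ}\,(y_1^{m_2-1}\cdots y_{r-1}^{m_r-1})$. $E_{N,r}$ is the $S_{N,r}\times S_{N,r}$ matrix with $(m,n)$-entry $e\binom{m}{n}$; $F_{N,r}=E_{N,r}-\mathrm{id}$. The restricted totally even part of a polynomial is the sum of its monomials in which every variable $x_1,\dots,x_r$ occurs with even exponent $\ge2$. For $1\le j\le r$, $\phi^{(j)}_{N,r}:\mathbf V_{N,r}\to\mathbf V_{N,r}$ is the linear map sending $Q$ to the restricted totally even part of $Q(x_1,\dots,x_r)+\sum_{i=r-j+1}^{r-1}\big(Q(x_1,\dots,x_{r-j},x_{i+1}-x_i,x_{r-j+1},\dots,\widehat{x_{i+1}},\dots,x_r)-Q(x_1,\dots,x_{r-j},x_{i+1}-x_i,x_{r-j+1},\dots,\widehat{x_i},\dots,x_r)\big)$ (in each term the argument list after $x_{i+1}-x_i$ is $x_{r-j+1},\dots,x_r$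 with one variable omitted). For $2\le j\le r-2$, $\phi^{(j)}_{N,r}$ maps $\mathbf W_{N,r}$ into itself. It is known (Tasaka) that for $r\ge2$ and $P\in\mathbf W_{N,r}$, $\pi(P)F_{N,r}$ lies in the left kernel $\{v: vE_{N,r}=0\}$. *)

From mathcomp Require Import all_boot all_order all_algebra.
Set Implicit Arguments. Unset Strict Implicit. Unset Printing Implicit Defensive.
Import GRing.Theory Num.Theory.
Local Open Scope ring_scope.

Definition mpoly := seq (rat * seq nat).

Definition mcoef (p : mpoly) (m : seq nat) : rat :=
  \sum_(t <- p | t.2 == m) t.1.

Definition meq (p q : mpoly) : Prop := forall m, mcoef p m = mcoef q m.

Definition mzero : mpoly := [::].
Definition madd (p q : mpoly) : mpoly := p ++ q.
Definition mscale (a : rat) (p : mpoly) : mpoly := [seq (a * t.1, t.2) | t <- p].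
Definition mopp (p : mpoly) : mpoly := mscale (-1) p.
Definition msub (p q : mpoly) : mpoly := madd p (mopp q).
Definition mmul (p q : mpoly) : mpoly :=
  [seq (a.1 * b.1, [seq (e.1 + e.2)%N | e <- zip a.2 b.2]) | a <- p, b <- q].
Definition mone (r : nat) : mpoly := [:: (1, nseq r 0%N)].
Definition mpow (r : nat) (p : mpoly) (n : nat) : mpoly := iter n (mmul p) (mone r).

(* the variable x_k (1-based index k) in r variables *)
Definition mX (r k : nat) : mpoly :=
  [:: (1, [seq nat_of_bool (m == k.-1)%N | m <- iota 0 r])].

Definition mmonom (r : nat) (s : seq mpoly) (e : seq nat) : mpoly :=
  foldr mmul (mone r) [seq mpow r (nth mzero s k) (nth 0%N e k) | k <- iota 0 r].
Definition msubst (r : nat) (p : mpoly) (s : seq mpoly) : mpoly :=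
  flatten [seq mscale t.1 (mmonom r s t.2) | t <- p].

(* monomials x_1^{n_1-1}...x_r^{n_r-1} with (n_1..n_r) in S_{N,r}:
   exponent lists of length r, all entries even >= 2, sum (n_i) = N *)
Definition inS (N r : nat) (m : seq nat) : bool :=
  [&& size m == r, all (fun e => ~~ odd e && (2 <= e)%N) m & (sumn m + r == N)%N].

Definition inV (N r : nat) (p : mpoly) : Prop :=
  forall m, mcoef p m != 0 -> inS N r m.

(* P belongs to W_{N,r}:
   P(x1,..,xr) = P(x2-x1,x2,x3,..,xr) - P(x2-x1,x1,x3,..,xr) *)
Definition inW (N r : nat) (p : mpoly) : Prop :=
  inV N r p /\
  meq p (msub (msubst r p (msub (mX r 2) (mX r 1) :: mX r 2 :: [seq mX r k | k <- iota 3 (r - 2)]))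
              (msubst r p (msub (mX r 2) (mX r 1) :: mX r 1 :: [seq mX r k | k <- iota 3 (r - 2)]))).

Definition rte (r : nat) (p : mpoly) : mpoly :=
  [seq t <- p | (size t.2 == r) && all (fun e => ~~ odd e && (2 <= e)%N) t.2].

(* argument list (x_1,..,x_{r-j}, x_{i+1}-x_i, x_{r-j+1},..,^x_o,..,x_r) *)
Definition phi_args (r j i o : nat) : seq mpoly :=
  [seq mX r k | k <- iota 1 (r - j)] ++
  msub (mX r i.+1) (mX r i) ::
  [seq mX r k | k <- iota (r - j + 1) j & k != o].

Definition phi (r j : nat) (Q : mpoly) : mpoly :=
  rte r (madd Q
    (flatten [seq msub (msubst r Q (phi_args r j i i.+1))
                       (msubst r Q (phi_args r j i i))
             | i <- iota (r - j + 1) (j - 1)])).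

(* phiComp r k Q = phi^{(k+1)} (phi^{(k)} ( ... phi^{(2)} Q)) ;
   the composition phi^{(r-1)} o ... o phi^{(2)} is phiComp r (r-2) *)
Fixpoint phiComp (r k : nat) (Q : mpoly) : mpoly :=
  match k with
  | 0 => Q
  | k'.+1 => phi r k'.+1.+1 (phiComp r k' Q)
  end.

Definition inImW (N r : nat) (Q : mpoly) : Prop :=
  exists P, inW N r P /\ meq Q (phiComp r (r - 2) P).

Definition inImV (N r : nat) (Q : mpoly) : Prop :=
  exists P, inV N r P /\ meq Q (phiComp r (r - 2) P).

Definition inKer (N r j : nat) (Q : mpoly) : Prop :=
  inV N r Q /\ meq (phi r j Q) mzero.

From mathcomp Require Import all_boot all_order all_algebra.
From mathcomp Require Import zify ring lra.
Set Implicit Arguments. Unset Strict Implicit. Unset Printing Implicit Defensive.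
Import GRing.Theory Num.Theory.
Local Open Scope ring_scope.

(* Write phi^(j) = rte o D_j, with D_j the linear operator inside phi^(j).
   Two facts give the theorem.
   (1) The restricted totally even part can be pushed through the chain: if
   the exponents of x_1, ..., x_{r-j+1} in a monomial are even >= 2 but the
   monomial is not totally even, then D_j of it has no totally even monomial
   (a parity count on a suitable weight), so on V_{N,r} the composition
   phi^(k+1) o ... o phi^(2) equals rte o D_{k+1} o ... o D_2.
   (2) Read as operators on functions Q^r -> Q, the D_j with j <= r - 2 leave
   x_1, x_2 alone and so preserve the relation defining W_{N,r}, while
   D_r o D_{r-1} kills every function satisfying that relation: in the double
   sum the terms cancel in pairs, by the antisymmetry f(a, c, ..) =
   -f(c, a, ..) that the relation implies.
   Hence phi^(r) of the image is rte (D_r (D_{r-1} Z)) = 0, and degrees are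
   preserved, so the image lies in V_{N,r}. *)

Lemma mcoef_nil m : mcoef [::] m = 0.
Proof. by rewrite /mcoef big_nil. Qed.

Lemma mcoef_cons t p m : mcoef (t :: p) m = (if t.2 == m then t.1 else 0) + mcoef p m.
Proof. by rewrite /mcoef big_cons; case: ifP => _; rewrite ?add0r. Qed.

Lemma mcoef_cat p q m : mcoef (p ++ q) m = mcoef p m + mcoef q m.
Proof. by rewrite /mcoef big_cat. Qed.

Lemma mcoef_scale a p m : mcoef (mscale a p) m = a * mcoef p m.
Proof. by rewrite /mcoef /mscale big_map mulr_sumr. Qed.

Lemma mcoef_flatten ps m : mcoef (flatten ps) m = \sum_(p <- ps) mcoef p m.
Proof.
elim: ps => [|p ps IH]; first by rewrite big_nil mcoef_nil.
by rewrite /= mcoef_cat big_cons IH.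
Qed.

Lemma mcoef_sub p q m : mcoef (msub p q) m = mcoef p m - mcoef q m.
Proof. by rewrite /msub /madd /mopp mcoef_cat mcoef_scale mulN1r. Qed.

Lemma mcoef_msubst r p s m :
  mcoef (msubst r p s) m = \sum_(t <- p) t.1 * mcoef (mmonom r s t.2) m.
Proof.
by rewrite /msubst mcoef_flatten big_map; apply: eq_bigr => t _; rewrite mcoef_scale.
Qed.

Lemma mcoef_eq0 p m : m \notin map snd p -> mcoef p m = 0.
Proof.
move=> hm; rewrite /mcoef big_seq_cond big1 // => t /andP [ht /eqP e].
by move: hm; rewrite -e map_f.
Qed.

Lemma sum_terms_mcoef (F : seq nat -> rat) (p : mpoly) (M : seq (seq nat)) :
  uniq M -> {subset map snd p <= M} ->
  \sum_(t <- p) t.1 * F t.2 = \sum_(m <- M) mcoef p m * F m.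
Proof.
move=> uM; elim: p => [|t p IH] sub.
  by rewrite big_nil big1 // => m _; rewrite mcoef_nil mul0r.
rewrite big_cons IH; last by move=> x hx; apply: sub; rewrite /= inE hx orbT.
have tM : t.2 \in M by apply: sub; rewrite /= inE eqxx.
under [RHS]eq_bigr => m _ do rewrite mcoef_cons mulrDl.
rewrite big_split /=; congr (_ + _).
rewrite (bigD1_seq t.2) //= eqxx big1 ?addr0 // => m /negPf.
by rewrite eq_sym => ->; rewrite mul0r.
Qed.

Lemma meq_sum_terms (F : seq nat -> rat) (p q : mpoly) :
  meq p q -> \sum_(t <- p) t.1 * F t.2 = \sum_(t <- q) t.1 * F t.2.
Proof.
move=> h.
rewrite (@sum_terms_mcoef F p (undup (map snd (p ++ q)))) ?undup_uniq //; last first.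
  by move=> x hx; rewrite mem_undup map_cat mem_cat hx.
rewrite (@sum_terms_mcoef F q (undup (map snd (p ++ q)))) ?undup_uniq //; last first.
  by move=> x hx; rewrite mem_undup map_cat mem_cat hx orbT.
by apply: eq_bigr => m _; rewrite h.
Qed.

Lemma meq_sym p q : meq p q -> meq q p. Proof. by move=> h m; rewrite h. Qed.

Lemma meq_trans p q s : meq p q -> meq q s -> meq p s.
Proof. by move=> h1 h2 m; rewrite h1 h2. Qed.

(* [inV] says nothing about monomials with zero coefficient, while the invariants
   below speak about every listed term of a polynomial. *)
Definition mnorm (p : mpoly) : mpoly :=
  [seq (mcoef p m, m) | m <- [seq m <- undup (map snd p) | mcoef p m != 0]].

Lemma mnorm_meq p : meq p (mnorm p).
Proof.
move=> m; rewrite [RHS]/mcoef /mnorm big_map big_filter_cond /= big_mkcond.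
have [hm|hm] := boolP (m \in map snd p).
  rewrite (bigD1_seq m) ?mem_undup ?undup_uniq //= eqxx andbT.
  rewrite big1 ?addr0 => [|x /negPf ->]; last by rewrite andbF.
  by case: eqP.
rewrite mcoef_eq0 // big1_seq // => x; rewrite mem_undup => hx.
have -> : (x == m) = false by apply: contraNF hm => /eqP <-.
by rewrite andbF.
Qed.

Lemma mnorm_terms N r p : inV N r p -> forall t, t \in mnorm p -> inS N r t.2.
Proof. by move=> hV t /mapP [m]; rewrite mem_filter => /andP [hc _] ->; exact: hV. Qed.

(** * Evaluation and the identity theorem *)

Definition eval_mono (r : nat) (e : seq nat) (w : seq rat) : rat :=
  \prod_(k < r) (nth 0 w k) ^+ (nth 0%N e k).
Definition meval (r : nat) (p : mpoly) (w : seq rat) : rat :=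
  \sum_(t <- p) t.1 * eval_mono r t.2 w.
Definition sized (r : nat) (p : mpoly) := all (fun t => size t.2 == r) p.

Lemma meval_cat r p q w : meval r (p ++ q) w = meval r p w + meval r q w.
Proof. by rewrite /meval big_cat. Qed.

Lemma meval_nil r w : meval r [::] w = 0.
Proof. by rewrite /meval big_nil. Qed.

Lemma meval_scale r a p w : meval r (mscale a p) w = a * meval r p w.
Proof. by rewrite /meval big_map mulr_sumr; apply: eq_bigr => t _; rewrite mulrA. Qed.

Lemma meval_sub r p q w : meval r (msub p q) w = meval r p w - meval r q w.
Proof. by rewrite /msub /madd /mopp meval_cat meval_scale mulN1r. Qed.

Lemma meval_flatten r ps w : meval r (flatten ps) w = \sum_(p <- ps) meval r p w.
Proof.
elim: ps => [|p ps IH]; first by rewrite big_nil meval_nil.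
by rewrite /= meval_cat big_cons IH.
Qed.

Lemma meval_meq r p q w : meq p q -> meval r p w = meval r q w.
Proof. exact: (meq_sum_terms (fun e => eval_mono r e w)). Qed.

Lemma eq_meval r p w w' : (forall k, (k < r)%N -> nth 0 w k = nth 0 w' k) ->
  meval r p w = meval r p w'.
Proof.
move=> h; rewrite /meval; apply: eq_bigr => t _; congr (_ * _).
by rewrite /eval_mono; apply: eq_bigr => k _; rewrite h.
Qed.

Lemma sized_cat r p q : sized r (p ++ q) = sized r p && sized r q.
Proof. by rewrite /sized all_cat. Qed.

Lemma sized_scale r a p : sized r (mscale a p) = sized r p.
Proof. by rewrite /sized all_map. Qed.

Lemma sized_sub r p q : sized r p -> sized r q -> sized r (msub p q).
Proof. by move=> hp hq; rewrite /msub /madd /mopp sized_cat sized_scale hp hq. Qed.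

Lemma sized_mone r : sized r (mone r).
Proof. by rewrite /sized /= size_nseq eqxx. Qed.

Lemma sized_mX r k : sized r (mX r k).
Proof. by rewrite /sized /= size_map size_iota eqxx. Qed.

Lemma sized_mmul r p q : sized r p -> sized r q -> sized r (mmul p q).
Proof.
move=> /allP hp /allP hq; apply/allP => t /allpairsP [[a b] [ha hb ->]] /=.
by rewrite size_map size_zip (eqP (hp _ ha)) (eqP (hq _ hb)) minnn.
Qed.

Lemma sized_mpow r p n : sized r p -> sized r (mpow r p n).
Proof. by move=> hp; elim: n => [|n IH] /=; [exact: sized_mone|exact: sized_mmul]. Qed.

Lemma sized_foldr_mmul r (ps : seq mpoly) :
  all (sized r) ps -> sized r (foldr mmul (mone r) ps).
Proof.
elim: ps => [|p ps IH] /=; first by move=> _; exact: sized_mone.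
by case/andP => hp hps; apply: sized_mmul => //; apply: IH.
Qed.

Lemma eval_mono_add r ea eb w : size ea = r -> size eb = r ->
  eval_mono r [seq (e.1 + e.2)%N | e <- zip ea eb] w = eval_mono r ea w * eval_mono r eb w.
Proof.
move=> ha hb; rewrite /eval_mono -big_split /=; apply: eq_bigr => k _.
rewrite (nth_map (0%N, 0%N)); last by rewrite size_zip ha hb minnn.
by rewrite nth_zip ?ha ?hb //= exprD.
Qed.

Lemma meval_mmul r p q w : sized r p -> sized r q ->
  meval r (mmul p q) w = meval r p w * meval r q w.
Proof.
move=> /allP hp /allP hq; rewrite /meval /mmul big_allpairs_dep mulr_suml.
apply: eq_big_seq => a ha; rewrite mulr_sumr; apply: eq_big_seq => b hb /=.
by rewrite eval_mono_add ?(eqP (hp _ ha)) ?(eqP (hq _ hb)) // mulrACA.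
Qed.

Lemma meval_mone r w : meval r (mone r) w = 1.
Proof.
rewrite /meval big_cons big_nil addr0 mul1r /eval_mono /= big1 // => k _.
by rewrite nth_nseq; case: ifP.
Qed.

Lemma meval_mpow r p n w : sized r p -> meval r (mpow r p n) w = meval r p w ^+ n.
Proof.
move=> hp; elim: n => [|n IH] /=; first by rewrite meval_mone.
by rewrite meval_mmul ?IH ?exprS //; exact: sized_mpow.
Qed.

Lemma meval_mX r k w : (1 <= k <= r)%N -> meval r (mX r k) w = nth 0 w k.-1.
Proof.
case/andP => hk1 hkr.
rewrite /meval big_cons big_nil addr0 mul1r /eval_mono /=.
have hk : (k.-1 < r)%N by rewrite prednK.
rewrite (bigD1 (Ordinal hk)) //= big1 ?mulr1.
  by rewrite (nth_map 0%N) ?size_iota // nth_iota // add0n eqxx expr1.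
move=> i /eqP hi; rewrite (nth_map 0%N) ?size_iota // nth_iota // add0n.
case: eqP => // he; exfalso; apply: hi; exact: val_inj.
Qed.

Lemma meval_foldr_mmul r (ps : seq mpoly) w : all (sized r) ps ->
  meval r (foldr mmul (mone r) ps) w = \prod_(p <- ps) meval r p w.
Proof.
elim: ps => [|p ps IH] /=; first by rewrite big_nil meval_mone.
case/andP => hp hps; rewrite big_cons meval_mmul ?IH //.
exact: sized_foldr_mmul.
Qed.

Definition sized_subst r (s : seq mpoly) := forall k, (k < r)%N -> sized r (nth mzero s k).

Lemma sized_subst_of_all r s : all (sized r) s -> sized_subst r s.
Proof.
move=> /allP h k _; case: (ltnP k (size s)) => hk; last by rewrite nth_default.
exact/h/mem_nth.
Qed.

Lemma sized_mmonom_factors r s e : sized_subst r s ->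
  all (sized r) [seq mpow r (nth mzero s k) (nth 0%N e k) | k <- iota 0 r].
Proof.
move=> hs; apply/allP => p /mapP [k]; rewrite mem_iota add0n => /andP [_ hk] ->.
exact/sized_mpow/hs.
Qed.

Lemma sized_mmonom r s e : sized_subst r s -> sized r (mmonom r s e).
Proof. by move=> hs; apply/sized_foldr_mmul/sized_mmonom_factors. Qed.

Lemma sized_msubst r p s : sized_subst r s -> sized r (msubst r p s).
Proof.
move=> hs; rewrite /msubst; elim: p => [|t p IH] //=.
by rewrite sized_cat sized_scale sized_mmonom.
Qed.

Lemma meval_mmonom r s e w : sized_subst r s ->
  meval r (mmonom r s e) w = \prod_(k < r) (meval r (nth mzero s k) w) ^+ (nth 0%N e k).
Proof.
move=> hs; rewrite /mmonom meval_foldr_mmul ?sized_mmonom_factors //.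
rewrite big_map -(big_mkord xpredT (fun k => meval r (nth mzero s k) w ^+ nth 0%N e k)).
rewrite /index_iota subn0; apply: eq_big_seq => k; rewrite mem_iota add0n => /andP [_ hk].
by rewrite meval_mpow //; exact: hs.
Qed.

Lemma meval_msubst r p s w : sized_subst r s ->
  meval r (msubst r p s) w = meval r p [seq meval r q w | q <- s].
Proof.
move=> hs; rewrite /msubst meval_flatten big_map /meval; apply: eq_bigr => t _.
rewrite -/(meval r _ w) meval_scale meval_mmonom //; congr (_ * _).
rewrite /eval_mono; apply: eq_bigr => k _; congr (_ ^+ _).
case: (ltnP k (size s)) => hk; first by rewrite (nth_map mzero).
by rewrite !nth_default ?size_map // meval_nil.
Qed.

Lemma sum_powers_eq0 (D : nat) (c : nat -> rat) :
  (forall x : rat, \sum_(d < D) c d * x ^+ d = 0) -> forall d, (d < D)%N -> c d = 0.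
Proof.
move=> h d hd.
have P0 : \poly_(i < D) c i = 0.
  apply: (@roots_geq_poly_eq0 _ _ [seq i%:R | i <- iota 0 D]).
  - by apply/allP => x /mapP [i _ ->]; rewrite /root horner_poly h.
  - by rewrite map_inj_uniq ?iota_uniq // => a b /eqP; rewrite eqr_nat => /eqP.
  - by rewrite size_map size_iota size_poly.
by have := coef_poly D c d; rewrite P0 coef0 hd => <-.
Qed.

Lemma eval_mono_cons r e x w :
  eval_mono r.+1 e (x :: w) = x ^+ (head 0%N e) * eval_mono r (behead e) w.
Proof.
rewrite /eval_mono big_ord_recl /=.
case: e => [|a e] /=.
  by rewrite expr0 !mul1r; apply: eq_bigr => k _; rewrite !nth_nil.
by congr (_ * _); apply: eq_bigr => k _; rewrite add0n.
Qed.

Definition mslice (p : mpoly) (d : nat) : mpoly :=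
  [seq (t.1, behead t.2) | t <- p & head 0%N t.2 == d].

Lemma sized_mslice r p d : sized r.+1 p -> sized r (mslice p d).
Proof.
move=> /allP h; apply/allP => t /mapP [u]; rewrite mem_filter => /andP [_ hu] -> /=.
by rewrite size_behead (eqP (h _ hu)).
Qed.

Lemma mcoef_mslice r p d m : sized r.+1 p -> mcoef p (d :: m) = mcoef (mslice p d) m.
Proof.
move=> /allP h; rewrite /mcoef /mslice big_map big_filter_cond big_mkcond [RHS]big_mkcond /=.
apply: eq_big_seq => t ht; have := eqP (h _ ht); case: t ht => a [|b e] //= _ _.
Qed.

Lemma head_le_sumn (p : mpoly) t :
  t \in p -> (head 0%N t.2 <= sumn [seq head 0%N u.2 | u <- p])%N.
Proof.
elim: p => [|u p IH] //=; rewrite inE => /orP [/eqP ->|ht]; first by rewrite leq_addr.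
by apply: leq_trans (IH ht) _; rewrite leq_addl.
Qed.

Lemma meval_slices r p x w :
  meval r.+1 p (x :: w) =
  \sum_(d < (sumn [seq head 0%N t.2 | t <- p]).+1) x ^+ d * meval r (mslice p d) w.
Proof.
set D := (sumn _).+1.
have hD t : t \in p -> (head 0%N t.2 < D)%N by move=> ht; rewrite /D ltnS head_le_sumn.
rewrite /meval.
under [RHS]eq_bigr => d _ do rewrite /mslice big_map big_filter mulr_sumr.
rewrite (exchange_big_dep xpredT) //=.
apply: eq_big_seq => t ht; rewrite eval_mono_cons.
rewrite (big_pred1 (Ordinal (hD t ht))) /=; first by rewrite mulrCA.
by move=> d; rewrite /= eq_sym -val_eqE.
Qed.

Lemma mcoef_sized r p m : sized r p -> size m != r -> mcoef p m = 0.
Proof.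
move=> hs hm; apply: mcoef_eq0; apply: contra hm => /mapP [t ht ->].
exact: (allP hs).
Qed.

Lemma meq0_of_meval r p : sized r p -> (forall w, meval r p w = 0) -> meq p mzero.
Proof.
elim: r p => [|r IH] p hs h m; rewrite mcoef_nil.
  case: m => [|a m]; last by rewrite (mcoef_sized hs).
  rewrite -(h [::]) /meval /mcoef big_mkcond /=.
  apply: eq_big_seq => t ht; have := allP hs _ ht; case: t {ht} => a [|b e] //= _.
  by rewrite /eval_mono big_ord0 mulr1.
case: m => [|d m]; first by rewrite (mcoef_sized hs).
rewrite (mcoef_mslice _ _ hs).
case: (ltnP d (sumn [seq head 0%N t.2 | t <- p]).+1) => hd; last first.
  rewrite /mcoef /mslice big_map big_filter_cond big_seq_cond big1 // => t.
  by case/andP => ht /andP [/eqP e _]; move: hd; rewrite -e ltnNge head_le_sumn.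
have := IH (mslice p d) (sized_mslice d hs) _ m; rewrite /mzero mcoef_nil; apply => w.
apply: (@sum_powers_eq0 _ (fun d => meval r (mslice p d) w)) hd => x.
by rewrite -[RHS](h (x :: w)) meval_slices; apply: eq_bigr => i _; rewrite mulrC.
Qed.

(** * The double difference operator *)

Definition deln (i : nat) (v : seq rat) := take i v ++ drop i.+1 v.
(* The gaps to the left and to the right of [v_p], with [v_(-1) = 0]. *)
Definition ldiff (p : nat) (v : seq rat) :=
  nth 0 v p - (if p is 0 then 0 else nth 0 v p.-1).
Definition rdiff (p : nat) (v : seq rat) := nth 0 v p.+1 - nth 0 v p.
(* The operator inside phi acting on the variables [v] of [g] (summation by parts,
   [DopE]); in this symmetric form the cancellation of [Dop_Dop_eq0] is visible. *)
Definition Dop (g : seq rat -> rat) (v : seq rat) : rat :=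
  \sum_(p < size v) (g (ldiff p v :: deln p v) -
                     (if (p.+1 < size v)%N then g (rdiff p v :: deln p v) else 0)).

Lemma size_deln i v : (i < size v)%N -> size (deln i v) = (size v).-1.
Proof. move=> h; rewrite /deln size_cat size_take size_drop h; lia. Qed.

Lemma nth_deln i v k : (i < size v)%N ->
  nth 0 (deln i v) k = if (k < i)%N then nth 0 v k else nth 0 v k.+1.
Proof.
move=> h; rewrite /deln nth_cat size_take h.
case: ifP => hk; first by rewrite nth_take.
rewrite nth_drop; congr nth; move/negbT: hk; lia.
Qed.

Lemma deln_deln p s w : (p < s)%N -> (s < size w)%N ->
  deln s.-1 (deln p w) = deln p (deln s w).
Proof.
move=> hps hs.
have hp : (p < size w)%N by lia.
have hs1 : (s.-1 < size (deln p w))%N by rewrite size_deln //; lia.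
have hp2 : (p < size (deln s w))%N by rewrite size_deln //; lia.
apply: (@eq_from_nth _ 0).
  by rewrite !size_deln //; lia.
move=> k _.
rewrite (nth_deln _ hs1) (nth_deln _ hp2) !nth_deln //.
case: (ltnP k p) => hkp.
  have -> : (k < s.-1)%N by lia.
  by have -> : (k < s)%N by lia.
case: (ltnP k s.-1) => hks.
  by have -> : (k.+1 < s)%N by lia.
have -> : (k.+1 < p)%N = false by lia.
by have -> : (k.+1 < s)%N = false by lia.
Qed.

Section GapsAfterDeletion.
Variables (p s : nat) (w : seq rat).
Hypotheses (hps : (p < s)%N) (hs : (s < size w)%N).

Lemma ldiff_deln_lt :
  ldiff s.-1 (deln p w) = if s == p.+1 then ldiff p w + rdiff p w else ldiff s w.
Proof.
have hp : (p < size w)%N by lia.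
rewrite /ldiff /rdiff !nth_deln //.
have -> : (s.-1 < p)%N = false by lia.
rewrite prednK; last by lia.
case: eqP => [->|hne] /=.
  case: (p) => [|p'] /=; first ring.
  rewrite ltnSn; ring.
case: (s) hps hs hne => [|[|s']] //= *; first by lia.
by have -> : (s' < p)%N = false by lia.
Qed.

Lemma rdiff_deln_lt : rdiff s.-1 (deln p w) = rdiff s w.
Proof.
have hp : (p < size w)%N by lia.
rewrite /rdiff !nth_deln //.
have -> : (s.-1.+1 < p)%N = false by lia.
have -> : (s.-1 < p)%N = false by lia.
by rewrite prednK //; lia.
Qed.

Lemma ldiff_deln_gt : ldiff p (deln s w) = ldiff p w.
Proof.
rewrite /ldiff !nth_deln // hps; case: p hps => [|p'] //= h.
by have -> : (p' < s)%N by lia.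
Qed.

Lemma rdiff_deln_gt : rdiff p (deln s w) = if s == p.+1 then rdiff p w + rdiff s w else rdiff p w.
Proof.
rewrite /rdiff !nth_deln // hps; case: eqP => [->|hne].
  rewrite ltnn; ring.
by have -> : (p.+1 < s)%N by lia.
Qed.
End GapsAfterDeletion.

Lemma big_ord_neq_lift n (p : 'I_n) (F : 'I_n -> rat) :
  \sum_(s < n | s != p) F s = \sum_(i < n.-1) F (lift p i).
Proof. by apply: (@addrI _ (F p)); rewrite -(@bigD1_ord _ _ _ _ p xpredT) // [RHS](bigD1 p). Qed.

Lemma sum_antisym_eq0 n (J : nat -> nat -> rat) :
  (forall p s, (p < n)%N -> (s < n)%N -> p != s -> J p s = - J s p) ->
  \sum_(p < n) \sum_(s < n | s != p) J p s = 0.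
Proof.
move=> hJ; set S := \sum_(p < n) _.
have swap : S = \sum_(p < n) \sum_(s < n | s != p) J s p.
  rewrite /S (exchange_big_dep xpredT) //=.
  by apply: eq_bigr => s _; apply: eq_bigl => p; rewrite eq_sym.
have : S = - S.
  rewrite {1}swap -sumrN; apply: eq_bigr => p _; rewrite -sumrN.
  by apply: eq_bigr => s hs; rewrite hJ // eq_sym.
by move/eqP; rewrite -addr_eq0 -mulr2n mulrn_eq0 => /eqP.
Qed.

(* The relation defining W_{N,r}, for functions on Q^r. *)
Definition Wrel (f : seq rat -> rat) :=
  forall a b R, f (a :: b :: R) = f ((b - a) :: b :: R) - f ((b - a) :: a :: R).

Section DoubleDifference.
Variable f : seq rat -> rat.
Hypothesis Wf : Wrel f.

Lemma W_antisym a c R : f (a :: c :: R) = - f (c :: a :: R).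
Proof.
have h1 := Wf a (a + c) R; have h2 := Wf c (a + c) R.
have e1 : a + c - a = c by ring.
have e2 : a + c - c = a by ring.
rewrite e1 in h1; rewrite e2 in h2; lra.
Qed.

Lemma W_shift u c R : f (u :: (c + u) :: R) = f (c :: (c + u) :: R) - f (c :: u :: R).
Proof. by have := Wf u (c + u) R; rewrite addrK. Qed.

Variable w : seq rat.

Definition Dterm (x : rat) (p q : nat) :=
  f (x :: ldiff q (deln p w) :: deln q (deln p w)) -
  (if (q.+1 < (size w).-1)%N then f (x :: rdiff q (deln p w) :: deln q (deln p w)) else 0).
(* The term of the double sum that deletes [v_p] and then the entry that was [v_s]. *)
Definition DDterm (p s : nat) :=
  Dterm (ldiff p w) p (unbump p s) -
  (if (p.+1 < size w)%N then Dterm (rdiff p w) p (unbump p s) else 0).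

(* For [s = p.+1] the two gaps merge and the relation itself is needed;
   otherwise antisymmetry suffices. *)
Lemma DDterm_antisym p s : (p < s)%N -> (s < size w)%N -> DDterm p s + DDterm s p = 0.
Proof.
move=> hps hs.
have u1 : unbump p s = s.-1 by rewrite /unbump hps subn1.
have u2 : unbump s p = p by rewrite /unbump ltnNge (ltnW hps) subn0.
rewrite /DDterm /Dterm u1 u2 (deln_deln hps hs) (ldiff_deln_lt hps hs).
rewrite (rdiff_deln_lt hps hs) (ldiff_deln_gt hps hs) (rdiff_deln_gt hps hs).
have -> : (p.+1 < size w)%N by lia.
set Z := deln p (deln s w).
have -> : (s.-1.+1 < (size w).-1)%N = (s.+1 < size w)%N by apply/idP/idP; lia.
case: eqP => [es|ne].
  subst s.
  have -> : (p.+1.+1 < size w)%N = (p.+1 < (size w).-1)%N by apply/idP/idP; lia.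
  set a := ldiff p w; set b := rdiff p w; set B := rdiff p.+1 w.
  have h1 := W_shift b a Z; have h2 := W_shift B b Z.
  have h3 := W_antisym a b Z; have h4 := W_antisym a B Z.
  rewrite /= in h1 h2 h3 h4 *.
  case: ifP => _; lra.
have -> : (p.+1 < (size w).-1)%N by lia.
set a := ldiff p w; set b := rdiff p w; set A := ldiff s w; set B := rdiff s w.
have h1 := W_antisym a A Z; have h2 := W_antisym a B Z.
have h3 := W_antisym b A Z; have h4 := W_antisym b B Z.
case: ifP => _; lra.
Qed.

Lemma Dop_deln x p : (p < size w)%N ->
  Dop (fun u => f (x :: u)) (deln p w) = \sum_(q < (size w).-1) Dterm x p q.
Proof. by move=> hp; rewrite /Dop /Dterm size_deln. Qed.

Lemma Dop_Dop_eq0 : Dop (fun y => Dop (fun u => f (head 0 y :: u)) (behead y)) w = 0.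
Proof.
rewrite {1}/Dop /=.
under eq_bigr => p _ do rewrite !Dop_deln ?ltn_ord //.
have -> : \sum_(p < size w)
   (\sum_(q < (size w).-1) Dterm (ldiff p w) p q -
    (if (p.+1 < size w)%N then \sum_(q < (size w).-1) Dterm (rdiff p w) p q else 0)) =
  \sum_(p < size w) \sum_(s < size w | s != p) DDterm p s.
  apply: eq_bigr => p _.
  have -> : (if (p.+1 < size w)%N then \sum_(q < (size w).-1) Dterm (rdiff p w) p q else 0)
     = \sum_(q < (size w).-1) (if (p.+1 < size w)%N then Dterm (rdiff p w) p q else 0).
    by case: ifP => _ //; rewrite big1.
  rewrite big_ord_neq_lift -sumrB.
  by apply: eq_bigr => q _; rewrite /DDterm /= bumpK.
apply: sum_antisym_eq0 => p s hp hs hne.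
case: (ltngtP p s) => h.
- by apply/eqP; rewrite -addr_eq0 DDterm_antisym.
- by apply/eqP; rewrite -addr_eq0 addrC DDterm_antisym.
- by move/eqP: hne.
Qed.
End DoubleDifference.

Definition Dphi (r j : nat) (Q : mpoly) : mpoly :=
  madd Q (flatten [seq msub (msubst r Q (phi_args r j i i.+1))
                       (msubst r Q (phi_args r j i i))
             | i <- iota (r - j + 1) (j - 1)]).

Lemma phiE r j Q : phi r j Q = rte r (Dphi r j Q).
Proof. by []. Qed.

Lemma map_nth_iota (w : seq rat) a len : (a + len <= size w)%N ->
  [seq nth 0 w k.-1 | k <- iota a.+1 len] = take len (drop a w).
Proof.
move=> h; rewrite -add1n iotaDl -map_comp.
rewrite -(map_nth_iota 0); last first.
  by rewrite leq_subRL //; apply: leq_trans h; apply: leq_addr.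
by apply: eq_map => k.
Qed.

Lemma filter_iota_neq a n c : (a <= c < a + n)%N ->
  [seq k <- iota a n | k != c] = iota a (c - a) ++ iota c.+1 (a + n - c.+1).
Proof.
move=> /andP [h1 h2].
have -> : n = ((c - a) + (a + n - c.+1).+1)%N by lia.
rewrite iotaD filter_cat; congr (_ ++ _).
  rewrite (@eq_in_filter _ _ predT) ?filter_predT // => k; rewrite mem_iota => hk.
  by apply/eqP => e; move: hk; rewrite e; lia.
have -> : (a + (c - a) = c)%N by lia.
rewrite /= eqxx /=.
have -> : (a + (c - a + (a + n - c.+1).+1) - c.+1 = a + n - c.+1)%N by lia.
rewrite (@eq_in_filter _ _ predT) ?filter_predT // => k; rewrite mem_iota => hk.
by apply/eqP => e; move: hk; rewrite e; lia.
Qed.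

Lemma map_nth_filter_iota (w : seq rat) m j o : (m + j = size w)%N -> (o < j)%N ->
  [seq nth 0 w k.-1 | k <- [seq k <- iota m.+1 j | k != m.+1 + o]] = deln o (drop m w).
Proof.
move=> hs ho.
rewrite filter_iota_neq; last by lia.
have -> : (m.+1 + o - m.+1 = o)%N by lia.
rewrite map_cat map_nth_iota; last by lia.
have -> : (m.+1 + o).+1 = (m + o.+1).+1 by lia.
rewrite map_nth_iota; last by lia.
have e : take (m.+1 + j - (m + o.+1).+1) (drop (m + o.+1) w) = drop (m + o.+1) w.
  by rewrite take_oversize // size_drop -hs; lia.
by rewrite e /deln drop_drop (addnC o.+1 m).
Qed.

Lemma sized_phi_args r j i o : sized_subst r (phi_args r j i o).
Proof.
move=> k _; case: (ltnP k (size (phi_args r j i o))) => hk; last by rewrite nth_default.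
have : nth mzero (phi_args r j i o) k \in phi_args r j i o by apply: mem_nth.
rewrite /phi_args mem_cat inE => /orP [/mapP [l _ ->]|/orP [/eqP ->|/mapP [l _ ->]]].
- exact: sized_mX.
- by apply: sized_sub; apply: sized_mX.
- exact: sized_mX.
Qed.

Lemma meval_phi_args r j i o w : (1 <= i)%N -> (i < r)%N -> (j <= r)%N ->
  [seq meval r q w | q <- phi_args r j i o] =
  [seq nth 0 w k.-1 | k <- iota 1 (r - j)] ++
  (nth 0 w i - nth 0 w i.-1) :: [seq nth 0 w k.-1 | k <- [seq k <- iota (r - j + 1) j | k != o]].
Proof.
move=> h1 h2 h3; rewrite /phi_args map_cat /= -map_comp.
rewrite meval_sub !meval_mX /=; try lia.
congr (_ ++ _ :: _).
  by apply/eq_in_map => k; rewrite mem_iota /= => hk; rewrite meval_mX //; lia.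
rewrite -map_comp; apply/eq_in_map => k; rewrite mem_filter mem_iota => /andP [_ hk].
by rewrite /= meval_mX //; lia.
Qed.

Lemma DopE g v n : size v = n.+1 ->
  Dop g v = g v + \sum_(p < n) (g (rdiff p v :: deln p.+1 v) - g (rdiff p v :: deln p v)).
Proof.
move=> hs; rewrite /Dop hs sumrB big_ord_recl big_ord_recr /= ltnn subr0 -addrA.
congr (_ + _).
  case: v hs => [|x v] //= _; rewrite /ldiff /deln /= drop0.
  by congr g; congr (_ :: _); rewrite subr0.
rewrite -sumrB; apply: eq_bigr => p _.
by rewrite ltnS ltn_ord.
Qed.

Lemma sum_iota0 n (F : nat -> rat) : \sum_(i <- iota 0 n) F i = \sum_(i < n) F i.
Proof. by rewrite -(big_mkord xpredT) /index_iota subn0. Qed.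

Lemma meval_Dphi r j Q w : size w = r -> (1 <= j <= r)%N ->
  meval r (Dphi r j Q) w = Dop (fun u => meval r Q (take (r - j) w ++ u)) (drop (r - j) w).
Proof.
move=> hs /andP [hj1 hjr].
set m := (r - j)%N.
have hv : size (drop m w) = (j - 1).+1 by rewrite size_drop; lia.
rewrite (DopE _ hv) cat_take_drop.
rewrite /Dphi /madd meval_cat meval_flatten big_map; congr (_ + _).
have -> : (r - j + 1 = m.+1 + 0)%N by lia.
rewrite iotaDl big_map sum_iota0.
apply: eq_bigr => p _; rewrite meval_sub !meval_msubst ?sized_phi_args //.
have hp := ltn_ord p.
have hmj : (m + j = size w)%N by rewrite hs /m; lia.
have e1 : [seq nth 0 w k.-1 | k <- iota 1 m] = take m w.
  by rewrite (map_nth_iota (a := 0)) ?drop0 //; lia.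
have e2 : nth 0 w (m.+1 + p) - nth 0 w (m.+1 + p).-1 = rdiff p (drop m w).
  by rewrite /rdiff !nth_drop; congr (nth 0 w _ - nth 0 w _); lia.
have hr1 : (r - j + 1 = m.+1)%N by rewrite /m; lia.
rewrite !meval_phi_args //; try lia.
rewrite e1 e2 hr1 -(addnS m.+1 p) !map_nth_filter_iota //; try lia.
all: exact: sized_phi_args.
Qed.

Definition truncw r (w : seq rat) := mkseq (nth 0 w) r.
Lemma size_truncw r w : size (truncw r w) = r. Proof. by rewrite size_mkseq. Qed.
Lemma meval_truncw r p w : meval r p w = meval r p (truncw r w).
Proof. by apply: eq_meval => k hk; rewrite nth_mkseq. Qed.

Lemma eq_Dop g g' v : (forall u, size u = size v -> g u = g' u) -> Dop g v = Dop g' v.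
Proof.
move=> h; rewrite /Dop; apply: eq_bigr => p _.
have hp := ltn_ord p.
by rewrite !h //= size_deln //; lia.
Qed.

Lemma DopB g1 g2 v : Dop (fun u => g1 u - g2 u) v = Dop g1 v - Dop g2 v.
Proof.
rewrite /Dop -sumrB; apply: eq_bigr => p _.
case: ifP => _; lra.
Qed.

Lemma sized_Dphi r j Q : sized r Q -> sized r (Dphi r j Q).
Proof.
move=> hQ; rewrite /Dphi /madd sized_cat hQ /=.
elim: (iota _ _) => [|i l IH] //=.
rewrite sized_cat IH andbT; apply: sized_sub; apply: sized_msubst; exact: sized_phi_args.
Qed.

Lemma Wrel_Dphi r j X : (2 <= r - j)%N -> (1 <= j)%N ->
  Wrel (meval r X) -> Wrel (meval r (Dphi r j X)).
Proof.
move=> h2 h1 hW a b R.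
set R' := truncw (r - 2) R.
have E : forall x y, meval r (Dphi r j X) (x :: y :: R) =
   Dop (fun u => meval r X (x :: y :: (take (r - j - 2) R' ++ u))) (drop (r - j - 2) R').
  move=> x y.
  rewrite (@eq_meval r _ _ (x :: y :: R')); last first.
    by move=> [|[|k]] //= hk; rewrite nth_mkseq //; lia.
  set m := (r - j - 2)%N.
  have hm : (r - j = m.+2)%N by rewrite /m; lia.
  rewrite meval_Dphi /=; last by lia.
    by rewrite hm.
  by rewrite /R' size_truncw; lia.
rewrite !E -DopB; apply: eq_Dop => u _; exact: hW.
Qed.

Lemma Wrel_meq r p q : meq p q -> Wrel (meval r p) -> Wrel (meval r q).
Proof. by move=> h hW a b R; rewrite -!(meval_meq _ _ h). Qed.

Lemma Wrel_of_inW N r P : (2 <= r)%N -> inW N r P -> Wrel (meval r P).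
Proof.
move=> hr [_ hm] a b R.
have sS c : sized_subst r
    (msub (mX r 2) (mX r 1) :: mX r c :: [seq mX r k | k <- iota 3 (r - 2)]).
  apply/sized_subst_of_all/allP => q.
  rewrite !inE => /orP [/eqP ->|/orP [/eqP ->|/mapP [k _ ->]]].
  - by apply: sized_sub; apply: sized_mX.
  - exact: sized_mX.
  - exact: sized_mX.
rewrite (meval_meq _ _ hm) meval_sub !meval_msubst //.
have hmap : forall k, (k < r - 2)%N ->
    nth 0 [seq meval r q (a :: b :: R) | q <- [seq mX r k0 | k0 <- iota 3 (r - 2)]] k = nth 0 R k.
  move=> k hk; rewrite -map_comp (nth_map 0%N) ?size_iota // nth_iota //= meval_mX; last by lia.
  by have -> : (3 + k).-1 = k.+2 by lia.
have h21 : meval r (msub (mX r 2) (mX r 1)) (a :: b :: R) = b - a.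
  by rewrite meval_sub !meval_mX //; lia.
have h2 : meval r (mX r 2) (a :: b :: R) = b by rewrite meval_mX //; lia.
have h1 : meval r (mX r 1) (a :: b :: R) = a by rewrite meval_mX //; lia.
congr (_ - _); apply: eq_meval => -[|[|k]] hk //=; rewrite hmap //; lia.
Qed.

Lemma Dphi_Dphi_eq0 r Z : (2 <= r)%N -> sized r Z -> Wrel (meval r Z) ->
  meq (Dphi r r (Dphi r (r - 1) Z)) mzero.
Proof.
move=> hr hZ hW; apply: meq0_of_meval; first by do 2 apply: sized_Dphi.
move=> w; rewrite meval_truncw meval_Dphi ?size_truncw //; last by lia.
rewrite subnn take0 drop0 /=.
rewrite -(Dop_Dop_eq0 hW (truncw r w)).
apply: eq_Dop => u hu; rewrite size_truncw in hu.
rewrite meval_Dphi //; last by lia.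
have -> : (r - (r - 1) = 1)%N by lia.
case: u hu => [|x u] /= hu; first by lia.
by rewrite take0 drop0.
Qed.

(** * Weighted degrees *)

Section Weights.
Local Close Scope ring_scope.

Definition weight (r : nat) (c : nat -> nat) (e : seq nat) : nat := \sum_(k < r) c k * nth 0 e k.
Definition homog (r : nat) (c : nat -> nat) (v : nat) (p : mpoly) :=
  all (fun t => (size t.2 == r) && (weight r c t.2 == v)) p.

Lemma homog_cat r c v p q : homog r c v (p ++ q) = homog r c v p && homog r c v q.
Proof. by rewrite /homog all_cat. Qed.

Lemma homog_scale r c v a p : homog r c v (mscale a p) = homog r c v p.
Proof. by rewrite /homog all_map. Qed.

Lemma homog_sub r c v p q : homog r c v p -> homog r c v q -> homog r c v (msub p q).
Proof. by move=> hp hq; rewrite /msub /madd /mopp homog_cat homog_scale hp hq. Qed.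

Lemma homog_mone r c : homog r c 0 (mone r).
Proof.
rewrite /homog /= size_nseq eqxx /= andbT /weight; apply/eqP.
by apply: big1 => k _; rewrite nth_nseq if_same muln0.
Qed.

Lemma weight_add r c ea eb : size ea = r -> size eb = r ->
  weight r c [seq (e.1 + e.2)%N | e <- zip ea eb] = (weight r c ea + weight r c eb)%N.
Proof.
move=> ha hb; rewrite /weight -big_split /=; apply: eq_bigr => k _.
rewrite (nth_map (0%N, 0%N)); last by rewrite size_zip ha hb minnn.
by rewrite nth_zip ?ha ?hb //= mulnDr.
Qed.

Lemma homog_mmul r c v1 v2 p q : homog r c v1 p -> homog r c v2 q -> homog r c (v1 + v2) (mmul p q).
Proof.
move=> /allP hp /allP hq; apply/allP => t /allpairsP [[a b] [ha hb ->]] /=.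
have /andP [/eqP sa /eqP wa] := hp _ ha; have /andP [/eqP sb /eqP wb] := hq _ hb.
rewrite /= in sa wa sb wb.
by rewrite size_map size_zip sa sb minnn eqxx (weight_add _ sa sb) wa wb eqxx.
Qed.

Lemma homog_mpow r c v p n : homog r c v p -> homog r c (n * v) (mpow r p n).
Proof.
move=> hp; elim: n => [|n IH] /=; first by rewrite mul0n; apply: homog_mone.
by rewrite mulSn; apply: homog_mmul.
Qed.

Lemma homog_mmonom r c s e (lam : nat -> nat) :
  (forall k, (k < r)%N -> homog r c (lam k) (nth mzero s k)) ->
  homog r c (\sum_(k < r) lam k * nth 0 e k) (mmonom r s e).
Proof.
move=> hs; rewrite /mmonom -(big_mkord xpredT (fun k => lam k * nth 0 e k)) /index_iota subn0.
have : forall k, k \in iota 0 r ->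
    homog r c (lam k * nth 0 e k) (mpow r (nth mzero s k) (nth 0 e k)).
  move=> k; rewrite mem_iota add0n => /andP [_ hk].
  by rewrite mulnC; apply: homog_mpow; apply: hs.
elim: (iota 0 r) => [|k l IH] h /=; first by rewrite big_nil; apply: homog_mone.
rewrite big_cons; apply: homog_mmul; first by apply: h; rewrite inE eqxx.
by apply: IH => x hx; apply: h; rewrite inE hx orbT.
Qed.

Lemma weight_mX r c v : (1 <= v <= r)%N ->
  weight r c [seq nat_of_bool (m == v.-1) | m <- iota 0 r] = c v.-1.
Proof.
move=> /andP [h1 h2]; rewrite /weight.
have hv : (v.-1 < r)%N by lia.
rewrite (bigD1 (Ordinal hv)) //= big1 ?addn0.
  by rewrite (nth_map 0%N) ?size_iota // nth_iota // add0n eqxx muln1.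
move=> k /eqP hk; rewrite (nth_map 0%N) ?size_iota // nth_iota // add0n.
case: eqP => e; last by rewrite muln0.
by exfalso; apply: hk; apply: val_inj.
Qed.

Lemma homog_mX r c v : (1 <= v <= r)%N -> homog r c (c v.-1) (mX r v).
Proof.
by move=> h; rewrite /homog /= size_map size_iota eqxx /= weight_mX // eqxx.
Qed.

Lemma nth_phi_args r j i o k : (j <= r)%N -> (r - j + 1 <= o <= r)%N -> (k < r)%N ->
  nth mzero (phi_args r j i o) k =
  if (k < r - j)%N then mX r k.+1
  else if k == (r - j)%N then msub (mX r i.+1) (mX r i)
  else mX r (if (k < o)%N then k else k.+1).
Proof.
move=> hj ho hk; rewrite /phi_args nth_cat size_map size_iota.
case: ltnP => h1.
  by rewrite (nth_map 0%N) ?size_iota // nth_iota // add1n.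
case: eqP => [->|hne]; first by rewrite subnn.
have -> : (k - (r - j) = (k - (r - j) - 1).+1)%N by lia.
rewrite /= filter_iota_neq; last by lia.
rewrite map_cat nth_cat size_map size_iota.
case: ltnP => h2.
  rewrite (nth_map 0%N) ?size_iota // nth_iota //.
  have -> : (k < o)%N by lia.
  by congr mX; lia.
rewrite (nth_map 0%N) ?size_iota; last by lia.
rewrite nth_iota; last by lia.
have -> : (k < o)%N = false by lia.
by congr mX; lia.
Qed.

Definition args_weight r j o (c : nat -> nat) i k : nat :=
  if (k < r - j)%N then c k else if k == (r - j)%N then c i
  else c (if (k < o)%N then k.-1 else k).

Lemma homog_phi_args r j i o c k :
  (j <= r)%N -> (r - j + 1 <= o <= r)%N -> (1 <= i)%N -> (i < r)%N ->
  c i.-1 = c i -> (k < r)%N ->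
  homog r c (args_weight r j o c i k) (nth mzero (phi_args r j i o) k).
Proof.
move=> hj ho hi1 hir hc hk; rewrite nth_phi_args // /args_weight.
case: ltnP => h1; first by apply: homog_mX; lia.
case: eqP => h2.
  apply: homog_sub; first by apply: (homog_mX c (v := i.+1)); lia.
  by rewrite -hc; apply: homog_mX; lia.
case: ltnP => h3.
  by have := homog_mX c (r := r) (v := k); rewrite /=; apply; lia.
by apply: (homog_mX c (v := k.+1)); lia.
Qed.

Lemma homog_mmonom_phi_args r j i o c e :
  (j <= r)%N -> (r - j + 1 <= o <= r)%N -> (1 <= i)%N -> (i < r)%N ->
  c i.-1 = c i ->
  homog r c (\sum_(k < r) args_weight r j o c i k * nth 0 e k) (mmonom r (phi_args r j i o) e).
Proof. by move=> *; apply: homog_mmonom => k hk; apply: homog_phi_args. Qed.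

Lemma sum_delta r (f : nat -> nat) s e :
  (s < r)%N -> (forall k, (k < r)%N -> f k = nat_of_bool (k == s)) ->
  \sum_(k < r) f k * nth 0 e k = nth 0 e s.
Proof.
move=> hs hf; rewrite (bigD1 (Ordinal hs)) //= hf // eqxx mul1n big1 ?addn0 //.
move=> k /eqP hk; rewrite hf //; case: eqP => h; last by rewrite mul0n.
by exfalso; apply: hk; apply: val_inj.
Qed.

Lemma weight_one_sumn r m : size m = r -> weight r (fun _ => 1) m = sumn m.
Proof.
move=> <-; rewrite /weight; elim: m => [|a m IH] /=; first by rewrite big_ord0.
by rewrite big_ord_recl /= mul1n -IH.
Qed.

Lemma weight_delta r u e : (u < r)%N -> weight r (fun k => nat_of_bool (k == u)) e = nth 0 e u.
Proof. by move=> hu; apply: sum_delta. Qed.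

Lemma sum_delta2 r (f : nat -> nat) s1 s2 e : (s1 < r)%N -> (s2 < r)%N -> s1 != s2 ->
  (forall k, (k < r)%N -> f k = nat_of_bool (k == s1) + nat_of_bool (k == s2)) ->
  \sum_(k < r) f k * nth 0 e k = nth 0 e s1 + nth 0 e s2.
Proof.
move=> h1 h2 hne hf.
under eq_bigr => k _ do rewrite hf // mulnDl.
rewrite big_split /= (@sum_delta r (fun k => nat_of_bool (k == s1)) s1) //.
by rewrite (@sum_delta r (fun k => nat_of_bool (k == s2)) s2).
Qed.

Lemma homog_terms r c v p e : homog r c v p -> e \in map snd p -> size e = r /\ weight r c e = v.
Proof.
by move=> /allP h /mapP [t ht ->]; have /andP [/eqP -> /eqP ->] := h t ht.
Qed.

End Weights.

(** * Restricted totally even parts *)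

Definition even_ge2 (e : nat) : bool := ~~ odd e && (2 <= e)%N.
Definition totally_even r (m : seq nat) := (size m == r) && all even_ge2 m.

Lemma mcoef_rte r p m : mcoef (rte r p) m = if totally_even r m then mcoef p m else 0.
Proof.
rewrite /mcoef /rte big_filter_cond; case: ifP => hg.
  apply: eq_bigl => t /=; case: (t.2 =P m) => [->|_]; rewrite ?andbT ?andbF //.
by rewrite big1 // => t /andP [h /eqP e]; move: hg; rewrite /totally_even -e h.
Qed.

Lemma meq_rte r p q : meq p q -> meq (rte r p) (rte r q).
Proof. by move=> h m; rewrite !mcoef_rte h. Qed.

Definition Dcoef r j e m := mcoef (Dphi r j [:: (1, e)]) m.

Lemma DcoefE r j e m : Dcoef r j e m = (if e == m then 1 else 0) +
  \sum_(i <- iota (r - j + 1) (j - 1))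
     (mcoef (mmonom r (phi_args r j i i.+1) e) m - mcoef (mmonom r (phi_args r j i i) e) m).
Proof.
rewrite /Dcoef /Dphi /madd mcoef_cat mcoef_cons mcoef_nil addr0 mcoef_flatten big_map.
congr (_ + _); apply: eq_bigr => i _.
by rewrite mcoef_sub !mcoef_msubst !big_cons !big_nil /= !addr0 !mul1r.
Qed.

Lemma mcoef_Dphi r j X m : mcoef (Dphi r j X) m = \sum_(t <- X) t.1 * Dcoef r j t.2 m.
Proof.
under [RHS]eq_bigr => t _ do rewrite DcoefE mulrDr mulr_sumr.
rewrite big_split /= /Dphi /madd mcoef_cat mcoef_flatten big_map; congr (_ + _).
  by rewrite /mcoef big_mkcond; apply: eq_bigr => t _; case: ifP; rewrite ?mulr1 ?mulr0.
rewrite exchange_big /=; apply: eq_bigr => i _.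
rewrite mcoef_sub !mcoef_msubst -sumrB; apply: eq_bigr => t _.
by rewrite mulrBr.
Qed.

Lemma meq_Dphi r j X Y : meq X Y -> meq (Dphi r j X) (Dphi r j Y).
Proof.
move=> h m; rewrite !mcoef_Dphi.
exact: (meq_sum_terms (fun e => Dcoef r j e m) h).
Qed.

Lemma meq_phi r j P Q : meq P Q -> meq (phi r j P) (phi r j Q).
Proof. by move=> h; rewrite !phiE; apply/meq_rte/meq_Dphi. Qed.

Lemma meq_phiComp r k P Q : meq P Q -> meq (phiComp r k P) (phiComp r k Q).
Proof. by move=> h; elim: k => [|k IH] //=; apply: meq_phi. Qed.

Lemma rte_Dphi_rte r j X :
  (forall t, t \in X -> ~~ totally_even r t.2 ->
     forall m, totally_even r m -> Dcoef r j t.2 m = 0) ->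
  meq (rte r (Dphi r j X)) (rte r (Dphi r j (rte r X))).
Proof.
move=> h m; rewrite !mcoef_rte; case: ifP => hm //.
rewrite !mcoef_Dphi /rte big_filter (bigID (fun t => totally_even r t.2)) /=.
rewrite [X in _ + X]big1_seq ?addr0 // => t /andP [hb ht].
by rewrite (h t ht hb m hm) mulr0.
Qed.

Lemma mcoef_homog_eq0 r c v p m : homog r c v p -> weight r c m != v -> mcoef p m = 0.
Proof.
move=> /allP hp hw; rewrite /mcoef big_seq_cond big1 // => t /andP [ht /eqP e].
by have /andP [_ /eqP hv] := hp t ht; move: hw; rewrite -e hv eqxx.
Qed.

Lemma mmonom_phi_args_eq r j i e :
  (j <= r)%N -> (r - j + 1 <= i)%N -> (i < r)%N -> nth 0 e i = 0%N ->
  mmonom r (phi_args r j i i.+1) e = mmonom r (phi_args r j i i) e.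
Proof.
move=> hj hi1 hir he; rewrite /mmonom; congr foldr.
apply/eq_in_map => k; rewrite mem_iota add0n => /andP [_ hk].
case: (k =P i) => [->|hki]; first by rewrite he.
rewrite !nth_phi_args //; try lia.
by have -> : (k < i.+1)%N = (k < i)%N by lia.
Qed.

Lemma mcoef_phi_args_eq0 r j i o c e m :
  (j <= r)%N -> (r - j + 1 <= i)%N -> (i < r)%N -> (o == i) || (o == i.+1) ->
  c i.-1 = c i -> weight r c m != \sum_(k < r) args_weight r j o c i k * nth 0 e k ->
  mcoef (mmonom r (phi_args r j i o) e) m = 0.
Proof.
move=> hj hi1 hir ho hc; apply: mcoef_homog_eq0.
have ho' : (r - j + 1 <= o <= r)%N by case/orP: ho => /eqP ->; lia.
by apply: homog_mmonom_phi_args => //; lia.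
Qed.

(* An odd exponent at [x_i] is detected by the weight of [x_(i-1) x_i], which
   pairs it with the even exponent of the difference variable. *)
Lemma mcoef_phi_args_odd r j i o e m :
  (j <= r)%N -> (r - j + 1 <= i)%N -> (i < r)%N -> (o == i) || (o == i.+1) ->
  ~~ odd (nth 0 e (r - j)) -> odd (nth 0 e i) -> totally_even r m ->
  mcoef (mmonom r (phi_args r j i o) e) m = 0.
Proof.
move=> hj hi1 hir ho heven hodd /andP [/eqP hsm hgm].
have mgood u : (u < r)%N -> even_ge2 (nth 0 m u).
  by move=> hu; apply: (allP hgm); apply: mem_nth; rewrite hsm.
set c := fun k : nat => nat_of_bool (k == i.-1) + nat_of_bool (k == i).
have hc : c i.-1 = c i by rewrite /c; lia.
apply: (mcoef_phi_args_eq0 (c := c)) => //.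
have -> : weight r c m = (nth 0 m i.-1 + nth 0 m i)%N by apply: sum_delta2 => //; lia.
rewrite (@sum_delta2 r _ (r - j)%N i); try lia.
  apply/eqP => h; have := congr1 odd h; rewrite !oddD.
  have := mgood i.-1 ltac:(lia); have := mgood i hir; rewrite /even_ge2.
  by case/andP => /negPf -> _ /andP [/negPf -> _]; rewrite (negPf heven) hodd.
move=> k hk; rewrite /args_weight /c; case/orP: ho => /eqP ->; do ! case: ifP => ?; lia.
Qed.

(* A bad exponent at [x_s], [s != i], survives as the exponent of a single variable. *)
Lemma mcoef_phi_args_bad r j i o s e m :
  (j <= r)%N -> (r - j + 1 <= i)%N -> (i < r)%N -> (o == i) || (o == i.+1) ->
  (r - j < s < r)%N -> s != i -> ~~ even_ge2 (nth 0 e s) -> totally_even r m ->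
  mcoef (mmonom r (phi_args r j i o) e) m = 0.
Proof.
move=> hj hi1 hir ho /andP [hs1 hs2] hsi hbad /andP [/eqP hsm hgm].
set u := if (s < i)%N then s.-1 else s.
set c := fun k : nat => nat_of_bool (k == u).
have hu : (u < r)%N by rewrite /u; case: ifP => _; lia.
have hc : c i.-1 = c i by rewrite /c /u; case: ifP => ?; lia.
apply: (mcoef_phi_args_eq0 (c := c)) => //.
rewrite weight_delta // (@sum_delta r _ s) //.
  by apply: contra hbad => /eqP <-; apply: (allP hgm); apply: mem_nth; rewrite hsm.
move=> k hk; rewrite /args_weight /c /u; case/orP: ho => /eqP ->; do ! case: ifP => ?; lia.
Qed.

Lemma Dcoef_not_even_eq0 r j e m : (1 <= j <= r)%N -> size e = r ->
  (forall u, (u <= r - j)%N -> even_ge2 (nth 0 e u)) -> ~~ all even_ge2 e ->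
  totally_even r m -> Dcoef r j e m = 0.
Proof.
move=> /andP [hj1 hjr] hse hfront hbad hm.
rewrite DcoefE.
have -> : (e == m) = false.
  by apply/negbTE; apply: contraNneq hbad => ->; case/andP: hm.
rewrite add0r big1_seq // => i; rewrite mem_iota => /andP [_ /andP [hi1 hi2]].
have hir : (i < r)%N by lia.
move: hbad; rewrite -has_predC => /(has_nthP 0%N) [s hs hsb]; rewrite hse in hs.
have hsj : (r - j < s)%N.
  by rewrite ltnNge; apply: contra hsb => h; apply: hfront.
have [esi|nsi] := eqVneq s i; last first.
  by rewrite !(@mcoef_phi_args_bad r j i _ s) ?eqxx ?orbT ?hs ?hsj.
case: (nth 0 e i =P 0%N) => [e0|en0].
  by rewrite mmonom_phi_args_eq ?subrr //; lia.
have hodd : odd (nth 0 e i).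
  move: hsb en0; rewrite esi /= /even_ge2 negb_and negbK.
  by case/orP => // h; case: (nth 0 e i) h => [|[|x]].
have heven : ~~ odd (nth 0 e (r - j)%N) by case/andP: (hfront (r - j)%N (leqnn _)).
by rewrite !mcoef_phi_args_odd ?eqxx ?orbT ?subrr.
Qed.

Lemma mem_Dphi r j X t : t \in Dphi r j X ->
  t \in X \/ exists i o, [/\ i \in iota (r - j + 1) (j - 1), (o == i) || (o == i.+1) &
        exists2 t0, t0 \in X & t.2 \in map snd (mmonom r (phi_args r j i o) t0.2)].
Proof.
rewrite /Dphi /madd mem_cat => /orP [h|]; first by left.
move/flattenP => [l /mapP [i hi ->]]; rewrite /msub /madd /mopp mem_cat => /orP [] h; right.
- exists i, i.+1; split => //; first by rewrite eqxx orbT.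
  move: h => /flattenP [l' /mapP [t0 ht0 ->]] /mapP [t1 ht1 ->] /=.
  by exists t0 => //; apply/mapP; exists t1.
- exists i, i; split => //; first by rewrite eqxx.
  move: h => /mapP [t2 + ->] => /flattenP [l' /mapP [t0 ht0 ->]] /mapP [t1 ht1 ->] /=.
  by exists t0 => //; apply/mapP; exists t1.
Qed.

(* D_j only mixes the variables x_(r-j+1), ..., x_r, so it preserves every
   weight that is constant on them. *)
Lemma weight_mem_Dphi r j c X t : (1 <= j <= r)%N ->
  (forall k, (r - j <= k < r)%N -> c k = c (r - j)%N) ->
  (forall t0, t0 \in X -> size t0.2 = r) -> t \in Dphi r j X ->
  exists2 t0, t0 \in X & size t.2 = r /\ weight r c t.2 = weight r c t0.2.
Proof.
move=> /andP [hj1 hjr] hc hX /mem_Dphi [ht|[i [o [hi ho [t0 ht0 hm]]]]].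
  by exists t => //; split; first exact: hX.
move: hi; rewrite mem_iota => /andP [hi1 hi2].
have hir : (i < r)%N by lia.
have hci : c i.-1 = c i by rewrite !hc //; lia.
have ho' : (r - j + 1 <= o <= r)%N by case/orP: ho => /eqP ->; lia.
have hi0 : (0 < i)%N by lia.
have [hs hw] := homog_terms (homog_mmonom_phi_args t0.2 hjr ho' hi0 hir hci) hm.
exists t0 => //; split => //; rewrite hw; apply: eq_bigr => k _; congr (_ * _)%N.
have hk := ltn_ord k; rewrite /args_weight; case: ltnP => // h1.
case: eqP => [->|h2]; first by rewrite (hc i) //; lia.
by case: ifP => // ?; rewrite (hc k) ?(hc k.-1) //; lia.
Qed.

Definition front_even (B : nat) (e : seq nat) := forall u, (u < B)%N -> even_ge2 (nth 0 e u).

Lemma front_even_Dphi r j B X : (1 <= j <= r)%N -> (B <= r - j)%N ->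
  (forall t, t \in X -> size t.2 = r /\ front_even B t.2) ->
  forall t, t \in Dphi r j X -> size t.2 = r /\ front_even B t.2.
Proof.
move=> hj hB hX t ht.
have hsX t0 : t0 \in X -> size t0.2 = r by case/hX.
have [_ _ [hs _]] := weight_mem_Dphi (c := fun _ => 0%N) hj (fun _ _ => erefl) hsX ht.
split => // u hu.
have hc k : (r - j <= k < r)%N -> nat_of_bool (k == u) = nat_of_bool (r - j == u)%N.
  by move=> hk; do 2 case: eqP => ?; lia.
have [t0 ht0 [_]] := weight_mem_Dphi hj hc hsX ht.
rewrite !weight_delta ?(hsX _ ht0); try lia.
by move=> ->; apply: (hX t0 ht0).2.
Qed.

Lemma sumn_mem_Dphi r j X t : (1 <= j <= r)%N ->
  (forall t0, t0 \in X -> size t0.2 = r) -> t \in Dphi r j X ->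
  exists2 t0, t0 \in X & size t.2 = r /\ sumn t.2 = sumn t0.2.
Proof.
move=> hj hX ht.
have [t0 ht0 [hs hw]] := weight_mem_Dphi (c := fun _ => 1%N) hj (fun _ _ => erefl) hX ht.
by exists t0 => //; rewrite -(weight_one_sumn hs) -(weight_one_sumn (hX _ ht0)).
Qed.

Fixpoint Dcomp (r k : nat) (X : mpoly) : mpoly :=
  match k with
  | 0 => X
  | k'.+1 => Dphi r k'.+2 (Dcomp r k' X)
  end.

Lemma Dcomp_front_even r k X : (k <= r - 2)%N -> (forall t, t \in X -> totally_even r t.2) ->
  forall t, t \in Dcomp r k X -> size t.2 = r /\ front_even (r - k - 1) t.2.
Proof.
move=> hk hX; elim: k hk => [|k IH] hk t /=.
  move=> /hX /andP [/eqP hs ha]; split => // u hu.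
  by apply: (allP ha); apply: mem_nth; rewrite hs; lia.
apply: front_even_Dphi; try lia.
by move=> t0 /IH [|hs hf]; [lia | split => // u hu; apply: hf; lia].
Qed.

Lemma sumn_mem_Dcomp r k X t : (k <= r - 2)%N ->
  (forall t0, t0 \in X -> size t0.2 = r) -> t \in Dcomp r k X ->
  exists2 t0, t0 \in X & size t.2 = r /\ sumn t.2 = sumn t0.2.
Proof.
move=> hk hX; elim: k hk t => [|k IH] hk t /=; first by exists t => //; split; first exact: hX.
have hsD t1 : t1 \in Dcomp r k X -> size t1.2 = r.
  by case/IH => [|t0 _ []]; first lia.
case/(sumn_mem_Dphi _ hsD) => [|t1 ht1 [hs ->]]; first lia.
by case/IH: ht1 => [|t0 ht0 [_ ->]]; [lia | exists t0].
Qed.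

Lemma Wrel_Dcomp r k X : (k <= r - 3)%N -> Wrel (meval r X) -> Wrel (meval r (Dcomp r k X)).
Proof.
move=> hk hW; elim: k hk => [|k IH] hk //=.
by apply: Wrel_Dphi; [lia | lia | apply: IH; lia].
Qed.

Lemma rte_id r X : (forall t, t \in X -> totally_even r t.2) -> meq X (rte r X).
Proof.
move=> hX m; rewrite mcoef_rte; case: ifP => // hm.
by rewrite mcoef_eq0 //; apply: contraFN hm => /mapP [t /hX ht ->].
Qed.

Lemma rte_Dphi_rte_Dcomp r k X : (k.+2 <= r)%N ->
  (forall t, t \in X -> totally_even r t.2) ->
  meq (rte r (Dphi r k.+2 (Dcomp r k X))) (rte r (Dphi r k.+2 (rte r (Dcomp r k X)))).
Proof.
move=> hk hX; apply: rte_Dphi_rte => t ht hbad m hm.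
have hk' : (k <= r - 2)%N by lia.
have [hs hf] := Dcomp_front_even hk' hX ht.
apply: Dcoef_not_even_eq0 => //.
- by move=> u hu; apply: hf; lia.
- by move: hbad; rewrite /totally_even hs eqxx.
Qed.

Lemma phiComp_rte_Dcomp r k X : (k <= r - 2)%N -> (forall t, t \in X -> totally_even r t.2) ->
  meq (phiComp r k X) (rte r (Dcomp r k X)).
Proof.
move=> hk hX; elim: k hk => [|k IH] hk; first exact: rte_id.
rewrite /= phiE; apply: meq_trans (meq_rte _ (meq_Dphi _ _ (IH _))) _; first lia.
by apply/meq_sym/rte_Dphi_rte_Dcomp => //; lia.
Qed.

Lemma inV_meq N r p q : meq p q -> inV N r p -> inV N r q.
Proof. by move=> h hp m; rewrite -h; apply: hp. Qed.

Lemma inV_rte N r X : (forall t, t \in X -> sumn t.2 + r = N)%N -> inV N r (rte r X).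
Proof.
move=> hX m; rewrite mcoef_rte; case: ifP => [hm0 hm|]; last by rewrite eqxx.
have /mapP [t ht em] : m \in map snd X by apply: contraNT hm => /mcoef_eq0 ->.
by case/andP: hm0 => hs ha; rewrite /inS hs ha em (hX t ht) eqxx.
Qed.

Lemma totally_even_mnorm N r P : inV N r P -> forall t, t \in mnorm P -> totally_even r t.2.
Proof. by move=> hP t /(mnorm_terms hP) /and3P [hs ha _]; rewrite /totally_even hs. Qed.

Lemma inV_phiComp N r k P : (k <= r - 2)%N -> inV N r P -> inV N r (phiComp r k P).
Proof.
move=> hk hP; have hS := mnorm_terms hP.
apply: inV_meq (meq_sym (meq_trans (meq_phiComp r k (mnorm_meq P)) _)) _.
  exact: phiComp_rte_Dcomp hk (totally_even_mnorm hP).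
apply: inV_rte => t ht.
have hsP t0 : t0 \in mnorm P -> size t0.2 = r by case/hS/and3P => /eqP.
by have [t0 /hS /and3P [_ _ /eqP hd] [_ ->]] := sumn_mem_Dcomp hk hsP ht.
Qed.

Lemma rte_mzero r : meq (rte r mzero) mzero.
Proof. by move=> m; rewrite mcoef_rte; case: ifP. Qed.

Lemma phi_phiComp_W_eq0 N r P : (3 <= r)%N -> inW N r P ->
  meq (phi r r (phiComp r (r - 2) P)) mzero.
Proof.
move=> hr hW; set P0 := mnorm P.
have hE := totally_even_mnorm hW.1.
have hW0 : Wrel (meval r P0) by apply: Wrel_meq (mnorm_meq P) (Wrel_of_inW _ hW); lia.
set Z := Dcomp r (r - 3) P0.
have hZ : sized r Z.
  have hk : (r - 3 <= r - 2)%N by lia.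
  by apply/allP => t /(Dcomp_front_even hk hE) [-> _].
have hDD := Dphi_Dphi_eq0 (ltnW hr) hZ (Wrel_Dcomp (leqnn _) hW0).
have eZ : Dcomp r (r - 2) P0 = Dphi r (r - 1) Z.
  have -> : (r - 2 = (r - 3).+1)%N by lia.
  by rewrite /= /Z; have -> : ((r - 3).+2 = r - 1)%N by lia.
have er : r = (r - 2).+2 by lia.
have hQ : meq (phiComp r (r - 2) P) (rte r (Dcomp r (r - 2) P0)).
  exact: meq_trans (meq_phiComp _ _ (mnorm_meq P)) (phiComp_rte_Dcomp (leqnn (r - 2)) hE).
apply: meq_trans (meq_phi r r hQ) _.
have := rte_Dphi_rte_Dcomp (k := r - 2) _ hE; rewrite -er eZ => /(_ (leqnn r)) hrte.
rewrite phiE; apply: meq_trans (meq_sym hrte) _.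
exact: meq_trans (meq_rte _ hDD) (rte_mzero r).
Qed.

Theorem lemma4p11 (N r : nat) (hN : (1 <= N)%N) (hr : (3 <= r)%N) :
  forall Q : mpoly, inImW N r Q -> inKer N r r Q /\ inImV N r Q.
Proof.
move=> Q [P [hW hQ]]; split; last by exists P; split; first exact: hW.1.
split.
- by apply: inV_meq (meq_sym hQ) (inV_phiComp _ hW.1).
- exact: meq_trans (meq_phi r r hQ) (phi_phiComp_W_eq0 hr hW).
Qed.
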